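(* Let $F=\{f_i\}_{i=1}^N$ be a tight frame for an $n$-dimensional Hilbert space $\mathcal{H}_n$ and let $p>1$. If $S_F^{-1}F\in\zeta_{\mathfrak{R}}^{(1),p}(F)$, then $S_F^{-1}F\in\zeta_{\mathcal{N}}^{(1),p}(F)$.
   Context: $F$ is tight if $\sum_i|\langle f,f_i\rangle|^2=A\|f\|^2$ for all $f$ and some $A>0$; $S_F$ is the frame operator and $S_F^{-1}F=\{S_F^{-1}f_i\}$ the canonical dual. $G=\{g_i\}$ is a dual of $F$ if $f=\sum_i\langle f,f_i\rangle g_i$ for all $f$. For a dual $G$ let $E_if=\langle f,f_i\rangle g_i$. Define $\mathrm{AE}_{\mathfrak{R}}^{(1),p}(F,G)=\{\frac1N\sum_i\rho(E_i)^p\}^{1/p}=\{\frac1N\sum_i|\langle f_i,g_i\rangle|^p\}^{1/p}$ ($\rho$ = spectral radius) and $\mathrm{AE}_{\mathcal{N}}^{(1),p}(F,G)=\{\frac1N\sum_i\omega(E_i)^p\}^{1/p}$ where $\omega(T)=\sup_{\|f\|=1}|\langle Tf,f\rangle|$ is the numerical radius (so $\omega(E_i)=\frac{|\langle f_i,g_i\rangle|+\|f_i\|\|g_i\|}2$). $\zeta_{\mathfrak{R}}^{(1),p}(F)$ (resp. $\zeta_{\mathcal{N}}^{(1),p}(F)$) is the set of duals minimizing $\mathrm{AE}_{\mathfrak{R}}^{(1),p}(F,\cdot)$ (resp. $\mathrm{AE}_{\mathcal{N}}^{(1),p}(F,\cdot)$) over all duals of $F$. *)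

From HB Require Import structures.
From mathcomp Require Import all_boot all_order all_algebra.
From mathcomp Require Import boolp classical_sets reals exp.
From mathcomp Require Import complex.
Set Implicit Arguments. Unset Strict Implicit. Unset Printing Implicit Defensive.
Import Order.TTheory GRing.Theory Num.Theory.
Local Open Scope ring_scope.
Local Open Scope complex_scope.

Section Frames.
Variable R : realType.
Local Notation C := R[i].

Definition cmod (z : C) : R := ComplexField.Normc.normc z.

Definition dotC n (u v : 'cV[C]_n) : C := \sum_(k < n) u k 0 * (v k 0)^*.

Definition vnorm n (u : 'cV[C]_n) : R := Num.sqrt (\sum_(k < n) cmod (u k 0) ^+ 2).

Definition tight_frame n N (F : 'I_N -> 'cV[C]_n) : Prop :=
  exists A : R, 0 < A /\
    forall f : 'cV[C]_n, \sum_(i < N) cmod (dotC f (F i)) ^+ 2 = A * vnorm f ^+ 2.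

(* frame operator S_F as a matrix: S_F f = sum_i <f,f_i> f_i *)
Definition frame_op n N (F : 'I_N -> 'cV[C]_n) : 'M[C]_n :=
  \sum_(i < N) F i *m (map_mx conjc (F i))^T.

Definition canonical_dual n N (F : 'I_N -> 'cV[C]_n) : 'I_N -> 'cV[C]_n :=
  fun i => invmx (frame_op F) *m F i.

Definition is_dual n N (F G : 'I_N -> 'cV[C]_n) : Prop :=
  forall f : 'cV[C]_n, f = \sum_(i < N) dotC f (F i) *: G i.

Definition Eop n N (F G : 'I_N -> 'cV[C]_n) (i : 'I_N) : 'cV[C]_n -> 'cV[C]_n :=
  fun f => dotC f (F i) *: G i.

Definition num_radius n (T : 'cV[C]_n -> 'cV[C]_n) : R :=
  sup [set cmod (dotC (T f) f) | f in [set f : 'cV[C]_n | vnorm f = 1]].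

(* AE_R^{(1),p}(F,G) = {1/N sum_i rho(E_i)^p}^{1/p} = {1/N sum_i |<f_i,g_i>|^p}^{1/p} *)
Definition AE_R n N (p : R) (F G : 'I_N -> 'cV[C]_n) : R :=
  powR ((N%:R)^-1 * \sum_(i < N) powR (cmod (dotC (F i) (G i))) p) p^-1.

Definition AE_N n N (p : R) (F G : 'I_N -> 'cV[C]_n) : R :=
  powR ((N%:R)^-1 * \sum_(i < N) powR (num_radius (Eop F G i)) p) p^-1.

Definition in_zeta_R n N (p : R) (F G : 'I_N -> 'cV[C]_n) : Prop :=
  is_dual F G /\ forall G', is_dual F G' -> AE_R p F G <= AE_R p F G'.

Definition in_zeta_N n N (p : R) (F G : 'I_N -> 'cV[C]_n) : Prop :=
  is_dual F G /\ forall G', is_dual F G' -> AE_N p F G <= AE_N p F G'.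

End Frames.

(* For a tight frame with bound A the frame operator is A times the identity,
   so the canonical dual is g_i = f_i / A, a nonnegative multiple of f_i.  For
   a rank-one operator E f = <f,u> v one always has
   |<u,v>| <= omega(E) <= ||u|| ||v||, and the two bounds agree when v is a
   nonnegative multiple of u.  Since the power mean is monotone, for every dual
   G we get AE_N(F, S^-1 F) <= AE_R(F, S^-1 F) <= AE_R(F, G) <= AE_N(F, G). *)

From mathcomp Require Import all_boot all_order all_algebra.
From mathcomp Require Import boolp classical_sets reals exp complex.
From mathcomp Require Import ring lra.

Set Implicit Arguments. Unset Strict Implicit. Unset Printing Implicit Defensive.
Import Order.TTheory GRing.Theory Num.Theory.
Local Open Scope ring_scope.
Local Open Scope complex_scope.
Local Open Scope classical_set_scope.

Lemma sqr_cauchy_schwarz (R : realFieldType) n (a b : 'I_n -> R) :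
  (\sum_(k < n) a k * b k) ^+ 2 <= (\sum_(k < n) a k ^+ 2) * (\sum_(k < n) b k ^+ 2).
Proof.
set L := _ ^+ 2; set Q := _ * _.
have QE : Q = \sum_j \sum_k a j ^+ 2 * b k ^+ 2.
  by rewrite /Q mulr_suml; apply: eq_bigr => j _; rewrite mulr_sumr.
have QE' : Q = \sum_j \sum_k a k ^+ 2 * b j ^+ 2 by rewrite QE exchange_big.
have LE : L = \sum_j \sum_k a j * b j * (a k * b k).
  by rewrite /L expr2 mulr_suml; apply: eq_bigr => j _; rewrite mulr_sumr.
have lagrange : Q + Q - L *+ 2 = \sum_j \sum_k (a j * b k - a k * b j) ^+ 2.
  rewrite {1}QE QE' LE -sumrMnl -big_split -sumrB; apply: eq_bigr => j _.
  by rewrite -sumrMnl -big_split -sumrB; apply: eq_bigr => k _ /=; ring.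
have : 0 <= Q + Q - L *+ 2.
  by rewrite lagrange sumr_ge0 // => j _; rewrite sumr_ge0 // => k _; exact: sqr_ge0.
lra.
Qed.

Lemma ler_power_mean (R : realType) N (p : R) (a b : 'I_N -> R) : 0 < p ->
  (forall i, 0 <= a i) -> (forall i, a i <= b i) ->
  powR ((N%:R)^-1 * \sum_(i < N) powR (a i) p) p^-1 <=
  powR ((N%:R)^-1 * \sum_(i < N) powR (b i) p) p^-1.
Proof.
move=> p0 a0 ab; have mean_ge0 c : 0 <= (N%:R)^-1 * \sum_(i < N) powR (c i) p.
  by rewrite mulr_ge0 ?invr_ge0 // sumr_ge0 // => i _; rewrite powR_ge0.
have p_ge0 : 0 <= p by exact: ltW.
apply: ge0_ler_powR; rewrite ?nnegrE ?invr_ge0 //.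
apply: ler_wpM2l; first by rewrite invr_ge0.
apply: ler_sum => i _; apply: ge0_ler_powR; rewrite ?nnegrE //.
exact: le_trans (a0 i) (ab i).
Qed.

Section Modulus.
Variable R : realType.
Implicit Types (z w : R[i]) (x : R).

Lemma cmodE z : (cmod z)%:C = `|z|.
Proof. by case: z. Qed.

Lemma cmod_ge0 z : 0 <= cmod z.
Proof. by rewrite -lecR cmodE; exact: normr_ge0. Qed.

Lemma cmodM z w : cmod (z * w) = cmod z * cmod w.
Proof. by apply: complexI; rewrite rmorphM /= !cmodE normrM. Qed.

Lemma cmodJ z : cmod z^* = cmod z.
Proof. by apply: complexI; rewrite !cmodE normcJ. Qed.

Lemma ger0_cmod x : 0 <= x -> cmod x%:C = x.
Proof. by move=> x0; apply: complexI; rewrite cmodE ger0_norm // ler0c. Qed.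

Lemma cmod0 : cmod (0 : R[i]) = 0.
Proof. exact: (@ger0_cmod 0). Qed.

Lemma mulcJ_cmod z : z * z^* = (cmod z ^+ 2)%:C.
Proof. by rewrite rmorphXn /= cmodE sqr_normc. Qed.

End Modulus.

Section InnerProduct.
Variables (R : realType) (n : nat).
Implicit Types (u v w : 'cV[R[i]]_n) (a : R[i]).

Lemma dotCDl u v w : dotC (u + v) w = dotC u w + dotC v w.
Proof. by rewrite /dotC -big_split; apply: eq_bigr => k _; rewrite mxE mulrDl. Qed.

Lemma dotCDr u v w : dotC w (u + v) = dotC w u + dotC w v.
Proof. by rewrite /dotC -big_split; apply: eq_bigr => k _; rewrite mxE rmorphD mulrDr. Qed.

Lemma dotCZl a u v : dotC (a *: u) v = a * dotC u v.
Proof. by rewrite /dotC mulr_sumr; apply: eq_bigr => k _; rewrite mxE mulrA. Qed.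

Lemma dotCZr a u v : dotC u (a *: v) = a^* * dotC u v.
Proof. by rewrite /dotC mulr_sumr; apply: eq_bigr => k _; rewrite mxE rmorphM /= mulrCA. Qed.

Lemma dotCNl u v : dotC (- u) v = - dotC u v.
Proof. by rewrite -scaleN1r dotCZl mulN1r. Qed.

Lemma dotC0r u : dotC u 0 = 0.
Proof. by rewrite /dotC big1 // => k _; rewrite mxE rmorph0 mulr0. Qed.

Lemma conj_dotC u v : (dotC u v)^* = dotC v u.
Proof.
by rewrite /dotC rmorph_sum; apply: eq_bigr => k _; rewrite rmorphM /= conjcK mulrC.
Qed.

Lemma dotC_suml m (c : 'I_m -> R[i]) (G : 'I_m -> 'cV[R[i]]_n) v :
  dotC (\sum_(i < m) c i *: G i) v = \sum_(i < m) c i * dotC (G i) v.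
Proof.
elim/big_rec2: _ => [|i y s _ <-]; last by rewrite dotCDl dotCZl.
by rewrite -(scale0r 0) dotCZl mul0r.
Qed.

Lemma vnorm_ge0 u : 0 <= vnorm u.
Proof. exact: sqrtr_ge0. Qed.

Lemma dotC_self u : dotC u u = (vnorm u ^+ 2)%:C.
Proof.
rewrite /vnorm sqr_sqrtr ?sumr_ge0 // => [|k _]; last exact: sqr_ge0.
by rewrite rmorph_sum; apply: eq_bigr => k _; rewrite mulcJ_cmod.
Qed.

Lemma dotC_self_eq0 u : (dotC u u == 0) = (u == 0).
Proof.
apply/idP/eqP => [|->]; last by rewrite dotC0r.
rewrite /dotC psumr_eq0 => [/allP u0|k _]; last exact: mulcJ_ge0.
apply/matrixP => k j; rewrite (ord1 j) mxE.
by have /u0 := mem_index_enum k; rewrite -sqr_normc sqrf_eq0 normr_eq0 => /eqP.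
Qed.

Lemma vnormZ (x : R) u : 0 <= x -> vnorm (x%:C *: u) = x * vnorm u.
Proof.
move=> x0; rewrite /vnorm -[x in x * _](ger0_norm x0) -sqrtr_sqr -sqrtrM ?sqr_ge0 //.
rewrite mulr_sumr; congr Num.sqrt.
by apply: eq_bigr => k _; rewrite mxE cmodM ger0_cmod // exprMn.
Qed.

Lemma cauchy_schwarz u v : cmod (dotC u v) <= vnorm u * vnorm v.
Proof.
have triangle : cmod (dotC u v) <= \sum_(k < n) cmod (u k 0) * cmod (v k 0).
  rewrite -lecR cmodE rmorph_sum; apply: le_trans (ler_norm_sum _ _ _) _.
  by rewrite le_eqVlt; apply/orP; left; apply/eqP/eq_bigr => k _;
    rewrite rmorphM /= !cmodE normrM normcJ.
apply: le_trans triangle _.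
rewrite /vnorm -sqrtrM ?sumr_ge0 // => [|k _]; last exact: sqr_ge0.
rewrite -[leLHS]ger0_norm ?sumr_ge0 // => [|k _]; last by rewrite mulr_ge0 ?cmod_ge0.
by rewrite -sqrtr_sqr ler_wsqrtr // sqr_cauchy_schwarz.
Qed.

Lemma cmod_dotC_scale_ge0 (x : R) u : 0 <= x ->
  cmod (dotC u (x%:C *: u)) = vnorm u * vnorm (x%:C *: u).
Proof.
move=> x0; rewrite vnormZ // dotCZr cmodM cmodJ ger0_cmod // dotC_self.
by rewrite ger0_cmod ?exprn_ge0 ?vnorm_ge0 //; ring.
Qed.

Lemma quadratic_form_eq0 (M : 'M[R[i]]_n) :
  (forall f, dotC (M *m f) f = 0) -> M = 0.
Proof.
move=> M0; have sesqui0 f g : dotC (M *m f) g = 0.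
  have := M0 (f + g); have := M0 (f + 'i%R *: g).
  rewrite !(mulmxDr, dotCDl, dotCDr) -scalemxAr !(dotCZl, dotCZr) !M0.
  rewrite !(add0r, addr0, mulr0); set B := dotC _ g; set B' := dotC _ f => eiN e1.
  have : 'i%R *+ 2 * B = 'i%R * (B + B') - ('i%R^* * B + 'i%R * B').
    by rewrite conjCi; ring.
  rewrite e1 eiN mulr0 subr0 => /eqP.
  by rewrite mulf_eq0 mulrn_eq0 (negbTE (neq0Ci _)) /= => /eqP.
apply/matrixP => i j; rewrite [RHS]mxE.
have /eqP := sesqui0 (delta_mx j 0) (M *m delta_mx j 0).
by rewrite dotC_self_eq0 -colE => /eqP/matrixP/(_ i 0); rewrite !mxE.
Qed.

End InnerProduct.

Section Frames.
Variables (R : realType) (n N : nat).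
Implicit Type F : 'I_N -> 'cV[R[i]]_n.

Lemma frame_opE F f : frame_op F *m f = \sum_(i < N) dotC f (F i) *: F i.
Proof.
rewrite /frame_op mulmx_suml; apply: eq_bigr => i _.
rewrite -mulmxA [X in _ *m X]mx11_scalar mul_mx_scalar !mxE; congr (_ *: _).
by apply: eq_bigr => k _; rewrite !mxE mulrC.
Qed.

Lemma tight_frame_opE F (A : R) :
  (forall f, \sum_(i < N) cmod (dotC f (F i)) ^+ 2 = A * vnorm f ^+ 2) ->
  frame_op F = (A%:C)%:M.
Proof.
move=> tightF; apply/eqP; rewrite -subr_eq0; apply/eqP/quadratic_form_eq0 => f.
rewrite mulmxBl mul_scalar_mx frame_opE dotCDl dotCNl dotC_suml dotCZl dotC_self.
rewrite -rmorphM -tightF rmorph_sum; apply/eqP; rewrite subr_eq0; apply/eqP.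
by apply: eq_bigr => i _; rewrite -(conj_dotC f (F i)) mulcJ_cmod.
Qed.

Lemma tight_canonical_dual F : tight_frame F ->
  exists2 x : R, 0 <= x & forall i, canonical_dual F i = x%:C *: F i.
Proof.
case=> A [A_gt0 /tight_frame_opE SE]; exists A^-1; first by rewrite invr_ge0 ltW.
by move=> i; rewrite /canonical_dual SE invmx_scalar mul_scalar_mx fmorphV.
Qed.

End Frames.

Section NumericalRadius.
Variables (R : realType) (n : nat).
Implicit Types (T : 'cV[R[i]]_n -> 'cV[R[i]]_n) (f u v : 'cV[R[i]]_n).

Definition abs_num_range T : set R :=
  [set cmod (dotC (T f) f) | f in [set f | vnorm f = 1]].

Lemma num_radius_ge T f : has_ubound (abs_num_range T) -> vnorm f = 1 ->
  cmod (dotC (T f) f) <= num_radius T.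
Proof. by move=> ubT f1; apply: (ub_le_sup ubT); exists f. Qed.

Lemma num_radius_le T (b : R) : 0 <= b ->
  (forall f, vnorm f = 1 -> cmod (dotC (T f) f) <= b) -> num_radius T <= b.
Proof.
move=> b0 Tb; have [[y Ty]|empty] := pselect (abs_num_range T !=set0).
  by apply: ge_sup; [exists y | move=> _ [f f1 <-]; exact: Tb].
by rewrite /num_radius sup_out // => -[].
Qed.

Lemma num_radius_ge0 T : has_ubound (abs_num_range T) -> 0 <= num_radius T.
Proof.
move=> ubT; have [[_ [f f1 _]]|empty] := pselect (abs_num_range T !=set0).
  exact: le_trans (cmod_ge0 _) (num_radius_ge ubT f1).
by rewrite /num_radius sup_out // => -[].
Qed.

Lemma rank_one_form_le u v f : vnorm f = 1 ->
  cmod (dotC (dotC f u *: v) f) <= vnorm u * vnorm v.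
Proof.
move=> f1; rewrite dotCZl cmodM; apply: ler_pM; rewrite ?cmod_ge0 //.
  by apply: le_trans (cauchy_schwarz _ _) _; rewrite f1 mul1r.
by apply: le_trans (cauchy_schwarz _ _) _; rewrite f1 mulr1.
Qed.

Lemma abs_num_range_rank_one_ubound u v :
  has_ubound (abs_num_range (fun f => dotC f u *: v)).
Proof. by exists (vnorm u * vnorm v) => _ [f f1 <-]; exact: rank_one_form_le. Qed.

Lemma num_radius_rank_one_le u v :
  num_radius (fun f => dotC f u *: v) <= vnorm u * vnorm v.
Proof.
by apply: num_radius_le; [rewrite mulr_ge0 ?vnorm_ge0 | exact: rank_one_form_le].
Qed.

Lemma cmod_dotC_le_num_radius u v :
  cmod (dotC u v) <= num_radius (fun f => dotC f u *: v).
Proof.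
have ubE := abs_num_range_rank_one_ubound u v.
have [v0|v_neq0] := eqVneq v 0.
  by rewrite v0 dotC0r cmod0 num_radius_ge0 // -v0.
have v_gt0 : 0 < vnorm v.
  rewrite lt_def vnorm_ge0 andbT; apply: contra v_neq0 => /eqP v0.
  by rewrite -dotC_self_eq0 dotC_self v0 expr0n.
(* the unit vector f = v / ||v|| attains |<E f, f>| = |<u, v>| *)
pose c : R := (vnorm v)^-1.
have c_ge0 : 0 <= c by rewrite invr_ge0 ltW.
set f := c%:C *: v.
have f1 : vnorm f = 1 by rewrite vnormZ // mulVf ?gt_eqF.
apply: le_trans (num_radius_ge ubE f1); rewrite le_eqVlt; apply/orP; left; apply/eqP.
rewrite /f !(dotCZl, dotCZr) !cmodM cmodJ dotC_self -conj_dotC cmodJ.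
rewrite ger0_cmod // ger0_cmod ?exprn_ge0 ?vnorm_ge0 //.
by rewrite mulrAC mulrA -expr2 -exprMn mulVf ?gt_eqF // expr1n mul1r.
Qed.

End NumericalRadius.

Theorem proposition5p6 (R : realType) (n N : nat) (F : 'I_N -> 'cV[R[i]]_n)
  (p : R) :
  tight_frame F -> 1 < p ->
  in_zeta_R p F (canonical_dual F) ->
  in_zeta_N p F (canonical_dual F).
Proof.
(* Never let unification compare canonical_dual F with x%:C *: F: deciding
   that conversion unfolds invmx and does not finish in practice. *)
move=> tightF p_gt1 [dualS minR]; split=> [|G dualG]; first exact: dualS.
have p_gt0 : 0 < p := lt_trans ltr01 p_gt1.
have [x x_ge0 canE] := tight_canonical_dual tightF.
apply: (@le_trans _ _ (AE_R p F (canonical_dual F))); last first.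
  apply: le_trans (minR _ dualG) _; apply: ler_power_mean => // i.
    exact: cmod_ge0.
  exact: cmod_dotC_le_num_radius.
apply: ler_power_mean => // i.
  exact: le_trans (cmod_ge0 _) (cmod_dotC_le_num_radius _ _).
rewrite /Eop canE cmod_dotC_scale_ge0 //; exact: num_radius_rank_one_le.
Qed.
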